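(* Let $X$ be a Banach space containing no subspace isomorphic to $\ell_1$. Then every bounded sequence $(x_n^* )$ in $X^*$ satisfies $\operatorname{ca}(x_n^* )\le 3\operatorname{ca}_{\rho^*}(x_n^* )$.
   Context: For a bounded sequence $(x_k^* )$ in $X^*$: $\operatorname{ca}(x_k^* )=\inf_{n}\operatorname{diam}\{x_k^*:k\ge n\}$ (norm diameter), and $\operatorname{ca}_{\rho^*}(x_k^* )=\sup\{\inf_n\sup_{k,l\ge n}\sup_{x\in L}|(x_k^*-x_l^* )(x)| : L\subset B_{X}\text{ weakly compact}\}$. *)

From Stdlib Require Import Reals Lra List Classical ClassicalEpsilon.
Open Scope R_scope.

Record Banach := {
  V :> Type;
  vzero : V;
  vadd : V -> V -> V;
  vopp : V -> V;
  vscal : R -> V -> V;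
  vnorm : V -> R;
  vadd_assoc : forall x y z, vadd x (vadd y z) = vadd (vadd x y) z;
  vadd_comm : forall x y, vadd x y = vadd y x;
  vadd_0 : forall x, vadd x vzero = x;
  vadd_opp : forall x, vadd x (vopp x) = vzero;
  vscal_1 : forall x, vscal 1 x = x;
  vscal_assoc : forall a b x, vscal a (vscal b x) = vscal (a * b) x;
  vscal_distr_l : forall a x y, vscal a (vadd x y) = vadd (vscal a x) (vscal a y);
  vscal_distr_r : forall a b x, vscal (a + b) x = vadd (vscal a x) (vscal b x);
  vnorm_eq0 : forall x, vnorm x = 0 <-> x = vzero;
  vnorm_triangle : forall x y, vnorm (vadd x y) <= vnorm x + vnorm y;
  vnorm_scal : forall a x, vnorm (vscal a x) = Rabs a * vnorm x;
  vcomplete : forall u : nat -> V,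
    (forall eps, 0 < eps -> exists N, forall m n, (N <= m)%nat -> (N <= n)%nat ->
        vnorm (vadd (u m) (vopp (u n))) < eps) ->
    exists x, forall eps, 0 < eps -> exists N, forall n, (N <= n)%nat ->
        vnorm (vadd (u n) (vopp x)) < eps
}.

Arguments vzero {_}.
Arguments vadd {_} _ _.
Arguments vopp {_} _.
Arguments vscal {_} _ _.
Arguments vnorm {_} _.

(* Total supremum / infimum of a set of reals (0 by convention when the set
   is empty or unbounded; all uses below are on nonempty bounded sets). *)
Definition Rsup (E : R -> Prop) : R :=
  match excluded_middle_informative (bound E /\ exists x, E x) with
  | left H => proj1_sig (completeness E (proj1 H) (proj2 H))
  | right _ => 0
  end.

Definition Rinf (E : R -> Prop) : R := - Rsup (fun x => E (- x)).

Definition is_dual (X : Banach) (f : X -> R) : Prop :=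
  (forall x y, f (vadd x y) = f x + f y) /\
  (forall a x, f (vscal a x) = a * f x) /\
  (exists M, forall x, Rabs (f x) <= M * vnorm x).

Definition dnorm (X : Banach) (f : X -> R) : R :=
  Rsup (fun r => exists x : X, vnorm x <= 1 /\ r = Rabs (f x)).

Definition weakly_open (X : Banach) (U : X -> Prop) : Prop :=
  forall x, U x -> exists (fs : list (X -> R)) (eps : R),
    Forall (is_dual X) fs /\ 0 < eps /\
    forall y, (forall f, In f fs -> Rabs (f (vadd y (vopp x))) < eps) -> U y.

Definition weakly_compact (X : Banach) (L : X -> Prop) : Prop :=
  forall (I : Type) (U : I -> X -> Prop),
    (forall i, weakly_open X (U i)) ->
    (forall x, L x -> exists i, U i x) ->
    exists l : list I, forall x, L x -> exists i, In i l /\ U i x.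

Definition is_l1 (a : nat -> R) : Prop :=
  exists l, infinite_sum (fun n => Rabs (a n)) l.

(* X contains a subspace isomorphic to ell_1: there is a linear isomorphic
   embedding T : ell_1 -> X (its range is then a (closed) subspace of X
   isomorphic to ell_1). *)
Definition contains_l1 (X : Banach) : Prop :=
  exists (T : (nat -> R) -> X) (c C : R), 0 < c /\ 0 < C /\
    (forall a b, is_l1 a -> is_l1 b ->
       T (fun n => a n + b n) = vadd (T a) (T b)) /\
    (forall r a, is_l1 a -> T (fun n => r * a n) = vscal r (T a)) /\
    (forall a l, infinite_sum (fun n => Rabs (a n)) l ->
       c * l <= vnorm (T a) /\ vnorm (T a) <= C * l).

Definition ca (X : Banach) (xs : nat -> X -> R) : R :=
  Rinf (fun s => exists n : nat, s =
    Rsup (fun t => exists k l : nat, (n <= k)%nat /\ (n <= l)%nat /\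
            t = dnorm X (fun x => xs k x - xs l x))).

Definition ca_rho (X : Banach) (xs : nat -> X -> R) : R :=
  Rsup (fun r => exists L : X -> Prop,
    (forall x, L x -> vnorm x <= 1) /\ weakly_compact X L /\
    r = Rinf (fun s => exists n : nat, s =
          Rsup (fun t => exists k l : nat, (n <= k)%nat /\ (n <= l)%nat /\
                  t = Rsup (fun u => exists x, L x /\ u = Rabs (xs k x - xs l x))))).

From Stdlib Require Import Reals Lra Lia List Classical ClassicalEpsilon.
Open Scope R_scope.

(* (1) Rosenthal's ell_1 theorem, in the form: every sequence in the unit ball
   of X has a weakly Cauchy subsequence.  If some sequence (y_j) and levels
   r < s are such that on every infinite set of indices some functional of
   the dual unit ball oscillates across [r, s], a splitting argument builds
   a subsequence (u_k) that is "independent": every finite sign pattern is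
   realised by a functional of the dual ball (>= s on the + indices, <= r on
   the - ones).  Such a sequence spans ell_1 isomorphically, with lower
   constant (s - r)/2.  Hence without ell_1 every oscillation can be killed
   on an infinite subset; doing so along finer and finer grids of levels and
   diagonalising yields a weakly Cauchy subsequence.

   (2) The reduction.  Choose z_n in the unit ball and k_n, l_n >= n with
   |(x_{k_n} - x_{l_n})(z_n)| close to ca.  Extract a weakly Cauchy
   subsequence of (z_n); halved consecutive differences w_i of a sparse
   further subsequence form a weakly null sequence, so {0} u {w_i} is a
   weakly compact subset of the unit ball, as is every singleton.  Writing
   z = 2 w + z', the uniform smallness of x_k - x_l on these two weakly
   compact sets (controlled by ca_rho) bounds |(x_k - x_l)(z)| by about
   3 ca_rho, whence ca <= 3 ca_rho. *)

Lemma vadd_0l (X : Banach) (x : X) : vadd vzero x = x.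
Proof. rewrite vadd_comm; apply vadd_0. Qed.

Lemma vadd_cancel (X : Banach) (x y z : X) : vadd x y = vadd x z -> y = z.
Proof.
  intro H.
  assert (E : vadd (vopp x) (vadd x y) = vadd (vopp x) (vadd x z)) by now rewrite H.
  rewrite !vadd_assoc, (vadd_comm _ (vopp x) x), vadd_opp, !vadd_0l in E. exact E.
Qed.

Lemma vscal_0 (X : Banach) (x : X) : vscal 0 x = vzero.
Proof.
  apply (vadd_cancel X (vscal 0 x)). rewrite vadd_0, <- vscal_distr_r. f_equal; ring.
Qed.

Lemma vscal_zero (X : Banach) c : vscal c (@vzero X) = vzero.
Proof.
  rewrite <- (vscal_0 X vzero) at 1. rewrite vscal_assoc. replace (c * 0) with 0 by ring.
  apply vscal_0.
Qed.

Lemma vopp_scal (X : Banach) (x : X) : vopp x = vscal (-1) x.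
Proof.
  apply (vadd_cancel X x). rewrite vadd_opp.
  assert (E : vadd x (vscal (-1) x) = vscal (1 + -1) x) by now rewrite vscal_distr_r, vscal_1.
  rewrite E. replace (1 + -1) with 0 by ring. now rewrite vscal_0.
Qed.

Lemma vopp_zero (X : Banach) : vopp (@vzero X) = vzero.
Proof. rewrite <- (vadd_0l X (vopp vzero)). apply vadd_opp. Qed.

Lemma vopp_add (X : Banach) (x y : X) : vopp (vadd x y) = vadd (vopp x) (vopp y).
Proof. rewrite !vopp_scal. apply vscal_distr_l. Qed.

Lemma vopp_opp (X : Banach) (x : X) : vopp (vopp x) = x.
Proof. rewrite !vopp_scal, vscal_assoc. replace (-1 * -1) with 1 by ring. apply vscal_1. Qed.

Lemma vscal_opp (X : Banach) (a : R) (x : X) : vscal a (vopp x) = vopp (vscal a x).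
Proof. rewrite !vopp_scal, !vscal_assoc. f_equal; ring. Qed.

Lemma vadd_swap (X : Banach) (a b c d : X) :
  vadd (vadd a b) (vadd c d) = vadd (vadd a c) (vadd b d).
Proof. rewrite !vadd_assoc. f_equal. rewrite <- !vadd_assoc. f_equal. apply vadd_comm. Qed.

Lemma vadd_rearr (X : Banach) (p q n : X) : vadd (vadd p q) (vopp n) = vadd (vadd p (vopp n)) q.
Proof. rewrite <- !vadd_assoc. f_equal. apply vadd_comm. Qed.

Lemma vnorm_zero (X : Banach) : vnorm (@vzero X) = 0.
Proof. apply vnorm_eq0. reflexivity. Qed.

Lemma vnorm_opp (X : Banach) (x : X) : vnorm (vopp x) = vnorm x.
Proof. rewrite vopp_scal, vnorm_scal, Rabs_left by lra. ring. Qed.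

Lemma vnorm_nonneg (X : Banach) (x : X) : 0 <= vnorm x.
Proof.
  pose proof (vnorm_triangle X x (vopp x)) as H.
  rewrite vadd_opp, vnorm_zero, vnorm_opp in H. lra.
Qed.

Definition dist (X : Banach) (x y : X) := vnorm (vadd x (vopp y)).

Lemma dist_self (X : Banach) (x : X) : dist X x x = 0.
Proof. unfold dist. rewrite vadd_opp. apply vnorm_zero. Qed.

Lemma dist_sym (X : Banach) (x y : X) : dist X x y = dist X y x.
Proof. unfold dist. rewrite <- vnorm_opp, vopp_add, vopp_opp, vadd_comm. reflexivity. Qed.

Lemma dist_tri (X : Banach) (x y z : X) : dist X x z <= dist X x y + dist X y z.
Proof.
  unfold dist. eapply Rle_trans; [|apply vnorm_triangle]. right. f_equal.
  rewrite <- vadd_assoc, (vadd_assoc _ (vopp y) y), (vadd_comm _ (vopp y) y), vadd_opp, vadd_0l.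
  reflexivity.
Qed.

Lemma vnorm_dist (X : Banach) (x y : X) : vnorm x <= vnorm y + dist X x y.
Proof.
  unfold dist. pose proof (vnorm_triangle X y (vadd x (vopp y))) as H.
  rewrite (vadd_comm _ x (vopp y)), vadd_assoc, vadd_opp, vadd_0l in H.
  rewrite vadd_comm. exact H.
Qed.

Lemma dual_zero (X : Banach) f : is_dual X f -> f vzero = 0.
Proof. intros [H _]. pose proof (H vzero vzero) as E. rewrite vadd_0 in E. lra. Qed.

Lemma dual_sub (X : Banach) f x y : is_dual X f -> f (vadd x (vopp y)) = f x - f y.
Proof.
  intros Hf. pose proof Hf as [Hadd _].
  pose proof (Hadd y (vopp y)) as E. rewrite vadd_opp, dual_zero in E by auto.
  rewrite Hadd. lra.
Qed.

Lemma dual_scal (X : Banach) f a x : is_dual X f -> f (vscal a x) = a * f x.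
Proof. intros [_ [H _]]. apply H. Qed.

Lemma Rsup_ub (E : R -> Prop) x : bound E -> E x -> x <= Rsup E.
Proof.
  intros Hb Hx. unfold Rsup. destruct excluded_middle_informative as [H|H].
  - destruct completeness as [s [Hs1 Hs2]]. simpl. apply Hs1; auto.
  - exfalso; apply H; split; eauto.
Qed.

Lemma Rsup_le (E : R -> Prop) b : (forall x, E x -> x <= b) -> 0 <= b -> Rsup E <= b.
Proof.
  intros Hb H0. unfold Rsup. destruct excluded_middle_informative as [H|H]; auto.
  destruct completeness as [s [Hs1 Hs2]]. simpl. apply Hs2. intros x Hx; auto.
Qed.

Lemma Rsup_lub (E : R -> Prop) b : (exists x, E x) -> (forall x, E x -> x <= b) -> Rsup E <= b.
Proof.
  intros Hne Hb. unfold Rsup. destruct excluded_middle_informative as [H|H].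
  - destruct completeness as [s [Hs1 Hs2]]. simpl. apply Hs2. intros x Hx; auto.
  - exfalso; apply H; split; auto. exists b. intros x Hx; auto.
Qed.

Lemma Rsup_nonneg (E : R -> Prop) x : E x -> 0 <= x -> 0 <= Rsup E.
Proof.
  intros Hx H0. unfold Rsup. destruct excluded_middle_informative as [H|H]; [|lra].
  destruct completeness as [s [Hs1 Hs2]]. simpl. apply Rle_trans with x; auto.
Qed.

Lemma Rsup_gt (E : R -> Prop) a : (exists x, E x) -> a < Rsup E -> exists x, E x /\ a < x.
Proof.
  intros Hne Ha. apply NNPP. intro Hn.
  assert (Hb : forall x, E x -> x <= a).
  { intros x Hx. apply Rnot_lt_le. intro. apply Hn. eauto. }
  pose proof (Rsup_lub E a Hne Hb). lra.
Qed.

Lemma Rinf_lb (E : R -> Prop) x b : (forall y, E y -> b <= y) -> E x -> Rinf E <= x.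
Proof.
  intros Hb Hx. unfold Rinf.
  assert (- x <= Rsup (fun y => E (- y))).
  { apply Rsup_ub. exists (- b). intros y Hy. apply Hb in Hy. lra.
    rewrite Ropp_involutive; auto. }
  lra.
Qed.

(* Bound valid even when E is not bounded below (Rinf is then 0). *)
Lemma Rinf_le_max (E : R -> Prop) x : E x -> Rinf E <= Rmax x 0.
Proof.
  intros Hx. unfold Rinf, Rsup. destruct excluded_middle_informative as [H|H].
  - destruct completeness as [s [Hs1 Hs2]]. simpl.
    assert (-x <= s) by (apply Hs1; rewrite Ropp_involutive; auto).
    pose proof (Rmax_l x 0). lra.
  - pose proof (Rmax_r x 0). lra.
Qed.

Lemma Rinf_lt (E : R -> Prop) a : (exists x, E x) -> Rinf E < a -> exists x, E x /\ x < a.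
Proof.
  intros [x0 Hx0] Ha. apply NNPP. intro Hn.
  assert (Hb : forall x, E x -> a <= x).
  { intros x Hx. apply Rnot_lt_le. intro. apply Hn. eauto. }
  unfold Rinf in Ha.
  assert (Rsup (fun y => E (- y)) <= - a).
  { apply Rsup_lub. exists (- x0). rewrite Ropp_involutive; auto.
    intros y Hy. apply Hb in Hy. lra. }
  lra.
Qed.

Lemma dual_bound (X : Banach) f x : is_dual X f -> vnorm x <= 1 -> Rabs (f x) <= dnorm X f.
Proof.
  intros Hf Hx. pose proof Hf as [_ [_ [Mf HMf]]]. apply Rsup_ub; [|eauto].
  exists (Rabs Mf). intros r [x' [Hx' ->]]. specialize (HMf x').
  pose proof (vnorm_nonneg X x'). pose proof (Rle_abs Mf). pose proof (Rabs_pos Mf).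
  apply Rle_trans with (Mf * vnorm x'); auto.
  destruct (Rle_dec 0 Mf); nra.
Qed.

Lemma dnorm_nonneg (X : Banach) f : 0 <= dnorm X f.
Proof.
  apply (Rsup_nonneg _ (Rabs (f vzero))); [|apply Rabs_pos].
  exists vzero. split; auto. rewrite vnorm_zero. lra.
Qed.

Lemma strict_ge (g : nat -> nat) : (forall j, (g j < g (S j))%nat) -> forall j, (j <= g j)%nat.
Proof. intros H j. induction j; [lia|]. specialize (H j). lia. Qed.

Lemma strict_mono (g : nat -> nat) :
  (forall j, (g j < g (S j))%nat) -> forall i j, (i < j)%nat -> (g i < g j)%nat.
Proof.
  intros H i j Hij. induction j; [lia|]. destruct (Nat.eq_dec i j) as [->|Hne]; [apply H|].
  specialize (IHj ltac:(lia)). specialize (H j). lia.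
Qed.

Fixpoint outrun (bound : nat -> nat) (i : nat) : nat :=
  match i with
  | O => O
  | S i' => Nat.max (S (outrun bound i')) (bound (outrun bound i'))
  end.

Lemma outrun_spec (bound : nat -> nat) (i : nat) :
  (outrun bound i < outrun bound (S i))%nat /\ (bound (outrun bound i) <= outrun bound (S i))%nat.
Proof.
  change (outrun bound (S i)) with (Nat.max (S (outrun bound i)) (bound (outrun bound i))). lia.
Qed.

Lemma weakly_compact_singleton (X : Banach) (z : X) : weakly_compact X (fun x => x = z).
Proof.
  intros I U HU Hc. destruct (Hc z eq_refl) as [i Hi].
  exists (i :: nil). intros x ->. exists i. split; simpl; auto.
Qed.

Definition weakly_null (X : Banach) (w : nat -> X) : Prop :=
  forall f, is_dual X f -> forall eps, 0 < eps ->
    exists N, forall i, (N <= i)%nat -> Rabs (f (w i)) < eps.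

Lemma finite_subcover_prefix (X : Banach) (I : Type) (U : I -> X -> Prop) (w : nat -> X) :
  (forall i, exists j, U j (w i)) ->
  forall N, exists l : list I, forall i, (i < N)%nat -> exists j, In j l /\ U j (w i).
Proof.
  intros H N. induction N as [|N IH].
  - exists nil. intros i Hi. lia.
  - destruct IH as [l Hl]. destruct (H N) as [j Hj]. exists (j :: l).
    intros i Hi. destruct (Nat.eq_dec i N) as [->|Hne].
    + exists j; simpl; auto.
    + destruct (Hl i) as [j' [Hj'1 Hj'2]]; [lia|]. exists j'; simpl; auto.
Qed.

Lemma weakly_null_basic_nbhd (X : Banach) (w : nat -> X) (eps : R) (fs : list (X -> R)) :
  weakly_null X w -> 0 < eps -> Forall (is_dual X) fs ->
  exists N, forall i, (N <= i)%nat -> forall f, In f fs -> Rabs (f (w i)) < eps.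
Proof.
  intros Hw Heps Hfs. induction Hfs as [|f fs Hf _ [N1 HN1]].
  - exists 0%nat. intros i _ f [].
  - destruct (Hw f Hf eps Heps) as [N2 HN2].
    exists (Nat.max N1 N2). intros i Hi g [<-|Hg].
    + apply HN2. lia.
    + apply HN1; auto. lia.
Qed.

Lemma weakly_compact_null_sequence (X : Banach) (w : nat -> X) :
  weakly_null X w -> weakly_compact X (fun x => x = vzero \/ exists i, x = w i).
Proof.
  intros Hw I U HU Hc.
  destruct (Hc vzero (or_introl eq_refl)) as [i0 Hi0].
  destruct (HU i0 vzero Hi0) as [fs [eps [Hfs [Heps HUi0]]]].
  destruct (weakly_null_basic_nbhd X w eps fs Hw Heps Hfs) as [N HN].
  destruct (finite_subcover_prefix X I U w
              (fun i => Hc (w i) (or_intror (ex_intro _ i eq_refl))) N) as [l Hl].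
  exists (i0 :: l). intros x [->|[i ->]].
  - exists i0. simpl; auto.
  - destruct (Compare_dec.le_lt_dec N i) as [Hi|Hi].
    + exists i0. split; [simpl; auto|]. apply HUi0. intros f Hf.
      rewrite vopp_zero, vadd_0. apply HN; auto.
    + destruct (Hl i Hi) as [j [Hj1 Hj2]]. exists j. simpl; auto.
Qed.

Definition weakly_cauchy (X : Banach) (y : nat -> X) := forall f, is_dual X f -> forall eps, 0 < eps ->
  exists N, forall p q, (N <= p)%nat -> (N <= q)%nat -> Rabs (f (y p) - f (y q)) < eps.

Definition rosenthal_property (X : Banach) := forall y : nat -> X, (forall j, vnorm (y j) <= 1) ->
  exists g : nat -> nat, (forall j, (g j < g (S j))%nat) /\ weakly_cauchy X (fun j => y (g j)).

(* Half the difference of two points; z = 2 (halfdiff z z') + z'. *)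
Definition halfdiff (X : Banach) (z z' : X) : X := vscal (/ 2) (vadd z (vopp z')).

Lemma dual_halfdiff (X : Banach) f z z' : is_dual X f -> f (halfdiff X z z') = / 2 * (f z - f z').
Proof. intros Hf. unfold halfdiff. rewrite dual_scal, dual_sub by auto. reflexivity. Qed.

Lemma halfdiff_ball (X : Banach) (z z' : X) :
  vnorm z <= 1 -> vnorm z' <= 1 -> vnorm (halfdiff X z z') <= 1.
Proof.
  intros Hz Hz'. unfold halfdiff. rewrite vnorm_scal, Rabs_right by lra.
  pose proof (vnorm_triangle X z (vopp z')) as H. rewrite vnorm_opp in H. lra.
Qed.

Lemma halfdiff_weakly_null (X : Banach) (y : nat -> X) (m : nat -> nat) :
  weakly_cauchy X y -> (forall i, (m i < m (S i))%nat) ->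
  weakly_null X (fun i => halfdiff X (y (m (S i))) (y (m i))).
Proof.
  intros Hy Hm f Hf e He. destruct (Hy f Hf (2 * e)) as [N HN]; [lra|].
  exists N. intros i Hi. rewrite dual_halfdiff by auto.
  pose proof (strict_ge m Hm i). pose proof (strict_ge m Hm (S i)).
  specialize (HN (m (S i)) (m i) ltac:(lia) ltac:(lia)).
  rewrite Rabs_mult, Rabs_right by lra. lra.
Qed.

Lemma halfdiff_estimate (X : Banach) f g z z' : is_dual X f -> is_dual X g ->
  Rabs (f z - g z) <= 2 * Rabs (f (halfdiff X z z') - g (halfdiff X z z')) + Rabs (f z' - g z').
Proof.
  intros Hf Hg. rewrite !dual_halfdiff by auto.
  replace (/ 2 * (f z - f z') - / 2 * (g z - g z')) with (/ 2 * ((f z - g z) - (f z' - g z')))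
    by ring.
  rewrite Rabs_mult, (Rabs_right (/ 2)) by lra.
  pose proof (Rabs_triang (f z - g z - (f z' - g z')) (f z' - g z')) as H.
  replace (f z - g z - (f z' - g z') + (f z' - g z')) with (f z - g z) in H by ring. lra.
Qed.

Lemma ca_witness (X : Banach) (xs : nat -> X -> R) n eps : 0 < eps ->
  exists k l z, (n <= k)%nat /\ (n <= l)%nat /\
  vnorm z <= 1 /\ ca X xs - eps < Rabs (xs k z - xs l z).
Proof.
  intros Heps.
  set (T := fun m => fun t => exists k l : nat, (m <= k)%nat /\ (m <= l)%nat /\
            t = dnorm X (fun x => xs k x - xs l x)).
  assert (Hca : ca X xs <= Rsup (T n)).
  { unfold ca. apply (Rinf_lb _ _ 0).
    - intros y [m ->]. apply (Rsup_nonneg _ (dnorm X (fun x => xs m x - xs m x))).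
      + exists m, m. auto.
      + apply dnorm_nonneg.
    - exists n. reflexivity. }
  destruct (Rsup_gt (T n) (ca X xs - eps)) as [t [[k [l [Hk [Hl ->]]]] Ht]].
  { exists (dnorm X (fun x => xs n x - xs n x)), n, n. auto. }
  { lra. }
  assert (Hne : exists u, exists x : X, vnorm x <= 1 /\ u = Rabs (xs k x - xs l x)).
  { exists (Rabs (xs k vzero - xs l vzero)), vzero. rewrite vnorm_zero. split; [lra|auto]. }
  destruct (Rsup_gt _ _ Hne Ht) as [u [[z [Hz ->]] Hu]].
  exists k, l, z. auto.
Qed.

Lemma ca_witness_sequence (X : Banach) (xs : nat -> X -> R) eps : 0 < eps ->
  exists (k l : nat -> nat) (z : nat -> X), forall n, (n <= k n)%nat /\ (n <= l n)%nat /\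
    vnorm (z n) <= 1 /\ ca X xs - eps < Rabs (xs (k n) (z n) - xs (l n) (z n)).
Proof.
  intros Heps.
  destruct (choice (fun n (p : nat * nat * X) => (n <= fst (fst p))%nat /\ (n <= snd (fst p))%nat /\
      vnorm (snd p) <= 1 /\ ca X xs - eps < Rabs (xs (fst (fst p)) (snd p) - xs (snd (fst p)) (snd p))))
    as [F HF].
  { intro n. destruct (ca_witness X xs n eps Heps) as [k [l [z H]]]. exists (k, l, z). exact H. }
  exists (fun n => fst (fst (F n))), (fun n => snd (fst (F n))), (fun n => snd (F n)). exact HF.
Qed.

Section Quantities.

Variables (X : Banach) (xs : nat -> X -> R) (M0 : R).
Hypothesis Hdual : forall k, is_dual X (xs k).
Hypothesis Hbdd : forall k, dnorm X (xs k) <= M0.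

Lemma dual_diff_bound k l x : vnorm x <= 1 -> Rabs (xs k x - xs l x) <= 2 * M0.
Proof.
  intros Hx. pose proof (dual_bound X _ x (Hdual k) Hx). pose proof (dual_bound X _ x (Hdual l) Hx).
  pose proof (Hbdd k); pose proof (Hbdd l).
  unfold Rminus. eapply Rle_trans; [apply Rabs_triang|]. rewrite Rabs_Ropp. lra.
Qed.

Lemma ca_rho_uniform (L : X -> Prop) : (forall x, L x -> vnorm x <= 1) -> weakly_compact X L ->
  forall eps, 0 < eps -> exists N, forall k l x, (N <= k)%nat -> (N <= l)%nat -> L x ->
     Rabs (xs k x - xs l x) < ca_rho X xs + eps.
Proof.
  intros HL HLc eps Heps.
  pose proof (dnorm_nonneg X (xs 0%nat)) as HM0. pose proof (Hbdd 0%nat) as Hb0.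
  set (tt := fun (L : X -> Prop) k l => Rsup (fun u => exists x, L x /\ u = Rabs (xs k x - xs l x))).
  set (ss := fun (L : X -> Prop) n =>
               Rsup (fun t => exists k l : nat, (n <= k)%nat /\ (n <= l)%nat /\ t = tt L k l)).
  assert (Htt : forall L, (forall x, L x -> vnorm x <= 1) -> forall k l, tt L k l <= 2 * M0).
  { intros L' HL' k l. apply Rsup_le; [|lra]. intros u [x [Hx ->]]. apply dual_diff_bound; auto. }
  assert (Hss : forall L, (forall x, L x -> vnorm x <= 1) -> forall n, ss L n <= 2 * M0).
  { intros L' HL' n. apply Rsup_le; [|lra]. intros u [k [l [_ [_ ->]]]]. apply Htt; auto. }
  assert (Hr : Rinf (fun s => exists n, s = ss L n) <= ca_rho X xs).
  { unfold ca_rho. apply Rsup_ub.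
    - exists (2 * M0). intros r [L' [HL' [_ ->]]].
      eapply Rle_trans; [apply (Rinf_le_max _ (ss L' 0%nat)); exists 0%nat; reflexivity|].
      apply Rmax_lub; [apply Hss; auto|lra].
    - exists L. split; auto. }
  destruct (Rinf_lt (fun s => exists n, s = ss L n) (ca_rho X xs + eps)) as [s [[n ->] Hs]].
  { exists (ss L 0%nat), 0%nat. reflexivity. }
  { lra. }
  exists n. intros k l x Hk Hl Hx.
  apply Rle_lt_trans with (ss L n); auto.
  apply Rle_trans with (tt L k l).
  - apply Rsup_ub; [|exists x; auto]. exists (2 * M0). intros u [x' [Hx' ->]].
    apply dual_diff_bound; auto.
  - apply Rsup_ub; [|exists k, l; auto]. exists (2 * M0). intros u [k' [l' [_ [_ ->]]]].
    apply Htt; auto.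
Qed.

Lemma ca_rho_pointwise eps : 0 < eps -> exists Ns : X -> nat, forall z, vnorm z <= 1 ->
  forall k l, (Ns z <= k)%nat -> (Ns z <= l)%nat -> Rabs (xs k z - xs l z) < ca_rho X xs + eps.
Proof.
  intros Heps.
  apply (choice (fun (z : X) (N : nat) => vnorm z <= 1 -> forall k l, (N <= k)%nat ->
      (N <= l)%nat -> Rabs (xs k z - xs l z) < ca_rho X xs + eps)).
  intro z. destruct (classic (vnorm z <= 1)) as [Hz|Hz]; [|exists 0%nat; contradiction].
  destruct (ca_rho_uniform (fun x => x = z)) with (eps := eps) as [N HN]; auto.
  - intros x ->; auto.
  - apply weakly_compact_singleton.
  - exists N. intros _ k l Hk Hl. apply HN; auto.
Qed.

End Quantities.

Lemma ca_le_3_ca_rho_of_rosenthal (X : Banach) (HR : rosenthal_property X)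
  (xs : nat -> X -> R) (M0 : R) (Hdual : forall k, is_dual X (xs k))
  (Hb : forall k, dnorm X (xs k) <= M0) :
  ca X xs <= 3 * ca_rho X xs.
Proof.
  apply Rnot_lt_le. intro Hlt.
  set (eps := (ca X xs - 3 * ca_rho X xs) / 8).
  assert (Heps : 0 < eps) by (unfold eps; lra).
  destruct (ca_witness_sequence X xs eps Heps) as [kk [ll [Z HZ]]].
  destruct (ca_rho_pointwise X xs M0 Hdual Hb eps Heps) as [Ns HNs].
  destruct (HR Z (fun j => proj1 (proj2 (proj2 (HZ j))))) as [g [Hg Hwc]].
  set (y := fun j => Z (g j)).
  assert (Hy : forall j, vnorm (y j) <= 1) by (intro j; apply HZ).
  (* Space the subsequence out so that m (i+1) passes the threshold of y (m i). *)
  set (m := outrun (fun j => Ns (y j))).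
  assert (Hm : forall i, (m i < m (S i))%nat) by (intro i; exact (proj1 (outrun_spec _ i))).
  assert (HmS : forall i, (Ns (y (m i)) <= m (S i))%nat) by (intro i; exact (proj2 (outrun_spec _ i))).
  set (w := fun i => halfdiff X (y (m (S i))) (y (m i))).
  set (L := fun x => x = vzero \/ exists i, x = w i).
  assert (HL : forall x, L x -> vnorm x <= 1).
  { intros x [->|[i ->]]; [rewrite vnorm_zero; lra|]. apply halfdiff_ball; apply Hy. }
  assert (HLc : weakly_compact X L)
    by exact (weakly_compact_null_sequence X w (halfdiff_weakly_null X y m Hwc Hm)).
  destruct (ca_rho_uniform X xs M0 Hdual Hb L HL HLc eps Heps) as [NL HNL].
  (* Compare the witness at j = m (NL+1) using z = 2 w NL + y (m NL). *)
  set (j := m (S NL)).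
  destruct (HZ (g j)) as [Hk [Hl [_ Hgt]]].
  set (k := kk (g j)) in *. set (l := ll (g j)) in *. fold (y j) in Hgt.
  assert (Hjg := strict_ge g Hg j). assert (Hji := strict_ge m Hm (S NL)). fold j in Hji.
  assert (Hw : Rabs (xs k (w NL) - xs l (w NL)) < ca_rho X xs + eps).
  { apply HNL; try lia. right; exists NL; auto. }
  assert (Hz' : Rabs (xs k (y (m NL)) - xs l (y (m NL))) < ca_rho X xs + eps).
  { specialize (HmS NL). fold j in HmS. apply HNs; [apply Hy | lia | lia]. }
  pose proof (halfdiff_estimate X (xs k) (xs l) (y j) (y (m NL)) (Hdual k) (Hdual l)) as Hest.
  unfold w in Hw. fold j in Hw, Hest.
  unfold eps in *. lra.
Qed.

Definition infinite (M : nat -> Prop) := forall n, exists m, (n <= m)%nat /\ M m.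

Lemma infinite_tail (N : nat -> Prop) (m : nat) :
  infinite N -> infinite (fun n => N n /\ (m < n)%nat).
Proof.
  intros H n. destruct (H (Nat.max n (S m))) as [k [Hk1 Hk2]].
  exists k. split; [lia|split; auto; lia].
Qed.

Lemma dependent_choice {A : Type} (valid : A -> Prop) (rel : A -> A -> Prop) (a0 : A) :
  valid a0 -> (forall a, valid a -> exists b, rel a b) -> (forall a b, valid a -> rel a b -> valid b) ->
  exists s : nat -> A, s 0%nat = a0 /\ forall i, valid (s i) /\ rel (s i) (s (S i)).
Proof.
  intros H0 Hex Hv.
  destruct (choice (fun a b => valid a -> rel a b)) as [f Hf].
  { intro a. destruct (classic (valid a)) as [Ha|Ha].
    - destruct (Hex a Ha) as [b Hb]. exists b; auto.
    - exists a; intro; contradiction. }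
  exists (fun i => Nat.iter i f a0). split; [reflexivity|].
  assert (Hval : forall i, valid (Nat.iter i f a0)).
  { induction i; simpl; auto. apply (Hv _ _ IHi (Hf _ IHi)). }
  intro i. split; [apply Hval|]. exact (Hf _ (Hval i)).
Qed.

Lemma infinite_pigeonhole {T : Type} (l : list T) (t : nat -> T) :
  (exists N, forall i, (N <= i)%nat -> In (t i) l) ->
  exists x, In x l /\ forall n, exists i, (n <= i)%nat /\ t i = x.
Proof.
  induction l as [|a l IH]; intros [N HN].
  - destruct (HN N (le_n N)).
  - destruct (classic (forall n, exists i, (n <= i)%nat /\ t i = a)) as [Ha|Ha].
    + exists a. split; simpl; auto.
    + apply not_all_ex_not in Ha. destruct Ha as [n0 Hn0].
      destruct IH as [x [Hx1 Hx2]].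
      { exists (Nat.max N n0). intros i Hi. destruct (HN i ltac:(lia)) as [E|E]; auto.
        exfalso. apply Hn0. exists i. split; [lia|auto]. }
      exists x. split; simpl; auto.
Qed.

Definition dual_ball (X : Banach) (f : X -> R) := is_dual X f /\ forall x, Rabs (f x) <= vnorm x.

Section Oscillation.

Variables (X : Banach) (y : nat -> X) (r s : R).

Definition oscillates (f : X -> R) (N : nat -> Prop) :=
  (forall n, exists m, (n <= m)%nat /\ N m /\ f (y m) <= r) /\
  (forall n, exists m, (n <= m)%nat /\ N m /\ s <= f (y m)).

Lemma oscillates_tail f D N a :
  oscillates f D -> (forall n, D n -> (a < n)%nat -> N n) -> oscillates f N.
Proof.
  intros [H1 H2] Hs. split; intro n.
  - destruct (H1 (Nat.max n (S a))) as [m [Hm [HD Hf]]]. exists m. split; [lia|auto with arith].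
    split; auto. apply Hs; auto. lia.
  - destruct (H2 (Nat.max n (S a))) as [m [Hm [HD Hf]]]. exists m. split; [lia|auto with arith].
    split; auto. apply Hs; auto. lia.
Qed.

Lemma oscillates_sub f N N' : oscillates f N' -> (forall n, N' n -> N n) -> oscillates f N.
Proof. intros Ho Hs. apply (oscillates_tail f N' N 0); auto. Qed.

Definition hereditarily_oscillating (C : (X -> R) -> Prop) (M : nat -> Prop) :=
  forall N, infinite N -> (forall n, N n -> M n) -> exists f, C f /\ oscillates f N.

Definition restrict_at (P : R -> Prop) (m : nat) (C : (X -> R) -> Prop) :=
  fun f => C f /\ P (f (y m)).

Definition below_r (v : R) : Prop := v <= r.
Definition above_s (v : R) : Prop := s <= v.

Definition side_constraints (Cs : list ((X -> R) -> Prop)) :=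
  map (fun C => (C, below_r)) Cs ++ map (fun C => (C, above_s)) Cs.

Lemma side_constraints_in Cs C :
  In C Cs -> In (C, below_r) (side_constraints Cs) /\ In (C, above_s) (side_constraints Cs).
Proof.
  intros HC. unfold side_constraints.
  split; apply in_app_iff; [left|right]; apply in_map_iff; eauto.
Qed.

Lemma side_constraints_inv Cs C P :
  In (C, P) (side_constraints Cs) -> In C Cs /\ (P = below_r \/ P = above_s).
Proof.
  intros H. unfold side_constraints in H. apply in_app_iff in H. destruct H as [H|H];
    apply in_map_iff in H; destruct H as [C' [E HC']]; injection E; intros; subst; auto.
Qed.

Definition splits (Cs : list ((X -> R) -> Prop)) (M : nat -> Prop) (m : nat) (M' : nat -> Prop) :=
  infinite M' /\ (forall n, M' n -> M n /\ (m < n)%nat) /\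
  forall C, In C Cs -> hereditarily_oscillating (restrict_at below_r m C) M' /\
                       hereditarily_oscillating (restrict_at above_s m C) M'.

Lemma no_split_obstruction Cs M :
  ~ (exists m, M m /\ exists M', splits Cs M m M') ->
  forall m, M m -> forall M', infinite M' -> (forall n, M' n -> M n /\ (m < n)%nat) ->
  exists C P, In (C, P) (side_constraints Cs) /\ exists N, infinite N /\ (forall n, N n -> M' n) /\
    forall f, C f -> P (f (y m)) -> ~ oscillates f N.
Proof.
  intros Hneg m Hm M' HM' HM'M. apply NNPP. intro Hn. apply Hneg. exists m. split; auto.
  exists M'. split; auto. split; auto. intros C HC. destruct (side_constraints_in Cs C HC) as [Hr Hs].
  split; intros N HN HNM; apply NNPP; intro Hno; apply Hn.
  - exists C, below_r. split; [exact Hr|]. exists N. split; [auto|]. split; [auto|].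
    intros f Hf HP Hosc. apply Hno. exists f. split; [split|]; auto.
  - exists C, above_s. split; [exact Hs|]. exists N. split; [auto|]. split; [auto|].
    intros f Hf HP Hosc. apply Hno. exists f. split; [split|]; auto.
Qed.

Record obstruction := mk_obstruction {
  ob_index : nat; ob_set : nat -> Prop;
  ob_class : (X -> R) -> Prop; ob_side : R -> Prop }.

Definition obstruction_step (Cs : list ((X -> R) -> Prop)) (a b : obstruction) :=
  ob_set a (ob_index b) /\ (ob_index a < ob_index b)%nat /\
  infinite (ob_set b) /\ (forall n, ob_set b n -> ob_set a n /\ (ob_index b < n)%nat) /\
  In (ob_class b, ob_side b) (side_constraints Cs) /\
  forall f, ob_class b f -> ob_side b (f (y (ob_index b))) -> ~ oscillates f (ob_set b).

Lemma obstruction_chain Cs M : infinite M -> ~ (exists m, M m /\ exists M', splits Cs M m M') ->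
  exists sq : nat -> obstruction, (forall i n, ob_set (sq i) n -> M n) /\
    forall i, obstruction_step Cs (sq i) (sq (S i)).
Proof.
  intros HMinf Hneg.
  pose proof (no_split_obstruction Cs M Hneg) as Hbad.
  set (valid := fun a => infinite (ob_set a) /\ forall n, ob_set a n -> M n).
  destruct (dependent_choice valid (obstruction_step Cs) (mk_obstruction 0%nat M (fun _ => True) below_r))
    as [sq [_ Hsq]].
  { split; auto. }
  { intros a [Ha1 Ha2]. destruct (Ha1 (S (ob_index a))) as [m' [Hm'1 Hm'2]].
    destruct (Hbad m' (Ha2 _ Hm'2) (fun n => ob_set a n /\ (m' < n)%nat) (infinite_tail _ _ Ha1))
      as [C [P [HCP [N' [HN'1 [HN'2 HN'3]]]]]].
    { intros n [H1 H2]. auto. }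
    exists (mk_obstruction m' N' C P). unfold obstruction_step; simpl.
    split; [exact Hm'2|]. split; [lia|]. split; [exact HN'1|]. split; [|split; [exact HCP|exact HN'3]].
    intros n Hn. destruct (HN'2 n Hn). auto. }
  { intros a b [Ha1 Ha2] [_ [_ [Hb1 [Hb2 _]]]]. split; [exact Hb1|].
    intros n Hn. apply Ha2. exact (proj1 (Hb2 n Hn)). }
  exists sq. split; [intros i; apply (Hsq i)|]. intro i. apply (Hsq i).
Qed.

Lemma obstruction_chain_nested Cs (sq : nat -> obstruction) :
  (forall i, obstruction_step Cs (sq i) (sq (S i))) ->
  (forall i, (ob_index (sq i) < ob_index (sq (S i)))%nat) /\
  (forall i j, (i <= j)%nat -> forall n, ob_set (sq j) n -> ob_set (sq i) n) /\
  (forall i, ob_set (sq i) (ob_index (sq (S i)))).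
Proof.
  intros Hsq. split; [|split].
  - intro i. destruct (Hsq i) as [_ [H _]]. exact H.
  - intros i j Hij. induction Hij; auto. intros n Hn. apply IHHij.
    destruct (Hsq m) as [_ [_ [_ [H _]]]]. exact (proj1 (H n Hn)).
  - intro i. destruct (Hsq i) as [H _]. exact H.
Qed.

(* Otherwise some obstruction (C, P) recurs infinitely often in a chain; an
   f in C oscillating on the set D of its indices meets the side P at some
   index of D and oscillates on the later ones, which lie in the obstruction
   set attached to that index: a contradiction. *)
Lemma splitting_lemma (Cs : list ((X -> R) -> Prop)) (M : nat -> Prop) :
  infinite M -> (forall C, In C Cs -> hereditarily_oscillating C M) ->
  exists m, M m /\ exists M', splits Cs M m M'.
Proof.
  intros HMinf HCs. apply NNPP; intro Hneg.
  destruct (obstruction_chain Cs M HMinf Hneg) as [sq [HsqM Hsq]].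
  destruct (obstruction_chain_nested Cs sq Hsq) as [Hmm [Hsub HmN]].
  set (mm := fun i => ob_index (sq i)) in *.
  destruct (infinite_pigeonhole (side_constraints Cs) (fun i => (ob_class (sq (S i)), ob_side (sq (S i)))))
    as [[Cst Pst] [Hin Hinf]].
  { exists 0%nat. intros i _. destruct (Hsq i) as [_ [_ [_ [_ [H _]]]]]. exact H. }
  destruct (side_constraints_inv _ _ _ Hin) as [HCst HPst].
  set (D := fun n => exists i, (ob_class (sq (S i)), ob_side (sq (S i))) = (Cst, Pst) /\ n = mm (S i)).
  assert (HDinf : infinite D).
  { intro n. destruct (Hinf n) as [i [Hi Ei]]. exists (mm (S i)). split.
    - pose proof (strict_ge mm Hmm (S i)). lia.
    - exists i. auto. }
  destruct (HCs Cst HCst D HDinf) as [f [Hf Hosc]].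
  { intros n [i [_ ->]]. apply (HsqM i), HmN. }
  assert (HPosc : exists m, D m /\ Pst (f (y m))).
  { destruct HPst as [->| ->]; [destruct (proj1 Hosc 0%nat) | destruct (proj2 Hosc 0%nat)];
      firstorder. }
  destruct HPosc as [m0 [[i0 [Ei0 ->]] HP0]]. injection Ei0; intros EP EC.
  destruct (Hsq i0) as [_ [_ [_ [_ [_ Hno]]]]].
  apply (Hno f); [rewrite EC; auto | rewrite EP; auto |].
  apply (oscillates_tail f D _ (mm (S i0)) Hosc).
  intros m'' [i'' [_ ->]] Hlt. apply (Hsub (S i0) i''); [|apply HmN].
  destruct (Compare_dec.le_lt_dec (S i0) i'') as [Hle|Hlt2]; [exact Hle|].
  destruct (Nat.eq_dec i'' i0) as [->|Hne]; [lia|].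
  pose proof (strict_mono mm Hmm (S i'') (S i0) ltac:(lia)). lia.
Qed.

(* The class of functionals of the dual ball realising the first n signs of
   the pattern sg at the indices ms 1, ..., ms n: value >= s for true and
   <= r for false. *)
Fixpoint pattern_class (ms : nat -> nat) (sg : nat -> bool) (n : nat) : (X -> R) -> Prop :=
  match n with
  | O => dual_ball X
  | S n' => restrict_at (if sg n' then above_s else below_r) (ms n) (pattern_class ms sg n')
  end.

Lemma pattern_class_spec ms sg n f : pattern_class ms sg n f ->
  dual_ball X f /\ forall k, (k < n)%nat ->
    (sg k = true -> s <= f (y (ms (S k)))) /\ (sg k = false -> f (y (ms (S k))) <= r).
Proof.
  revert f. induction n as [|n IH]; intros f Hf.
  - split; auto. intros; lia.
  - simpl in Hf. destruct Hf as [Hf HP]. destruct (IH f Hf) as [HS Hk]. split; auto.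
    intros k Hkn. destruct (Nat.eq_dec k n) as [->|Hne].
    + destruct (sg n); split; intro E; try discriminate; auto.
    + apply Hk. lia.
Qed.

Record split_stage := mk_stage {
  st_classes : list ((X -> R) -> Prop); st_index : nat; st_set : nat -> Prop }.

Lemma independent_subsequence (M : nat -> Prop) :
  infinite M -> hereditarily_oscillating (dual_ball X) M ->
  exists ms : nat -> nat, forall (sg : nat -> bool) n, exists f, pattern_class ms sg n f.
Proof.
  intros HM HS.
  set (valid := fun a => infinite (st_set a) /\
     forall C, In C (st_classes a) -> hereditarily_oscillating C (st_set a)).
  set (rel := fun a b => infinite (st_set b) /\
     st_classes b = map (restrict_at above_s (st_index b)) (st_classes a) ++
                    map (restrict_at below_r (st_index b)) (st_classes a) /\
     forall C, In C (st_classes b) -> hereditarily_oscillating C (st_set b)).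
  destruct (dependent_choice valid rel (mk_stage (dual_ball X :: nil) 0%nat M)) as [sq [Hsq0 Hsq]].
  { split; auto. intros C [<-|[]]. auto. }
  { intros a [Ha1 Ha2].
    destruct (splitting_lemma (st_classes a) (st_set a) Ha1 Ha2) as [m [_ [M' [HM'1 [_ HM'3]]]]].
    exists (mk_stage (map (restrict_at above_s m) (st_classes a) ++
                      map (restrict_at below_r m) (st_classes a)) m M').
    unfold rel; simpl. split; auto. split; auto.
    intros C HC. apply in_app_iff in HC. destruct HC as [HC|HC]; apply in_map_iff in HC;
      destruct HC as [C' [<- HC']]; apply HM'3; auto. }
  { intros a b _ [Hb1 [_ Hb3]]. split; auto. }
  exists (fun n => st_index (sq n)). intros sg n.
  assert (Hin : In (pattern_class (fun n => st_index (sq n)) sg n) (st_classes (sq n))).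
  { induction n as [|n IH].
    - rewrite Hsq0. simpl. auto.
    - destruct (Hsq n) as [_ [_ [E _]]]. rewrite E. simpl. apply in_app_iff.
      destruct (sg n); [left|right]; apply in_map_iff;
        exists (pattern_class (fun n => st_index (sq n)) sg n); (split; [reflexivity|auto]). }
  destruct (Hsq n) as [[Hv1 Hv2] _].
  destruct (Hv2 _ Hin (st_set (sq n)) Hv1 (fun _ h => h)) as [f [Hf _]]. eauto.
Qed.

End Oscillation.

Fixpoint vsum (X : Banach) (v : nat -> X) (n : nat) : X :=
  match n with O => vzero | S n' => vadd (vsum X v n') (v n') end.

Fixpoint rsum (a : nat -> R) (n : nat) : R :=
  match n with O => 0 | S n' => rsum a n' + a n' end.

Lemma rsum_sum_f (a : nat -> R) n : rsum a (S n) = sum_f_R0 a n.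
Proof. induction n; simpl in *; [lra|]. rewrite <- IHn. reflexivity. Qed.

Lemma rsum_ext (a b : nat -> R) n : (forall k, a k = b k) -> rsum a n = rsum b n.
Proof. intros H. induction n; simpl; auto. rewrite IHn, H. reflexivity. Qed.

Lemma rsum_le (a b : nat -> R) n : (forall k, (k < n)%nat -> a k <= b k) -> rsum a n <= rsum b n.
Proof.
  induction n; simpl; intros H; [lra|].
  pose proof (H n ltac:(lia)). pose proof (IHn (fun k Hk => H k ltac:(lia))). lra.
Qed.

Lemma rsum_scal (a : nat -> R) c n : rsum (fun k => c * a k) n = c * rsum a n.
Proof. induction n; simpl; [ring|]. rewrite IHn. ring. Qed.

Lemma rsum_mono (a : nat -> R) n m : (forall k, 0 <= a k) -> (n <= m)%nat -> rsum a n <= rsum a m.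
Proof. intros Ha Hnm. induction Hnm; [lra|]. simpl. pose proof (Ha m). lra. Qed.

Lemma rsum_le_sum (a : nat -> R) l : (forall k, 0 <= a k) -> infinite_sum a l ->
  forall n, rsum a n <= l.
Proof.
  intros Hpos Hl n. apply Rnot_lt_le. intro Hlt.
  destruct (Hl (rsum a n - l)) as [N HN]; [lra|].
  specialize (HN (Nat.max N n) ltac:(lia)). rewrite <- rsum_sum_f in HN.
  pose proof (rsum_mono _ n (S (Nat.max N n)) Hpos ltac:(lia)).
  unfold R_dist in HN. apply Rabs_def2 in HN. lra.
Qed.

Lemma dual_vsum (X : Banach) f v n : is_dual X f -> f (vsum X v n) = rsum (fun k => f (v k)) n.
Proof.
  intros Hf. induction n; simpl. apply dual_zero; auto.
  destruct Hf as [Ha _]. rewrite Ha, IHn. reflexivity.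
Qed.

Definition conv (X : Banach) (v : nat -> X) (x : X) := forall eps, 0 < eps ->
  exists N, forall n, (N <= n)%nat -> vnorm (vadd (v n) (vopp x)) < eps.

Lemma conv_unique (X : Banach) v x x' : conv X v x -> conv X v x' -> x = x'.
Proof.
  intros H1 H2.
  assert (Hd : dist X x x' = 0).
  { apply Rle_antisym; [|apply vnorm_nonneg]. apply le_epsilon. intros eps Heps.
    destruct (H1 (eps/2)) as [N1 HN1]; [lra|]. destruct (H2 (eps/2)) as [N2 HN2]; [lra|].
    specialize (HN1 (Nat.max N1 N2) ltac:(lia)). specialize (HN2 (Nat.max N1 N2) ltac:(lia)).
    pose proof (dist_tri X x (v (Nat.max N1 N2)) x') as H.
    rewrite (dist_sym X x (v (Nat.max N1 N2))) in H. unfold dist in *. lra. }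
  unfold dist in Hd. apply vnorm_eq0 in Hd.
  assert (E : vadd (vadd x (vopp x')) x' = vadd vzero x') by now rewrite Hd.
  rewrite <- vadd_assoc, (vadd_comm _ (vopp x')), vadd_opp, vadd_0, vadd_0l in E. exact E.
Qed.

Lemma conv_ext (X : Banach) v w x : (forall n, v n = w n) -> conv X v x -> conv X w x.
Proof. intros E H eps Heps. destruct (H eps Heps) as [N HN]. exists N. intros n Hn. rewrite <- E. auto. Qed.

Lemma conv_add (X : Banach) v w x z : conv X v x -> conv X w z ->
  conv X (fun n => vadd (v n) (w n)) (vadd x z).
Proof.
  intros H1 H2 eps Heps. destruct (H1 (eps/2)) as [N1 HN1]; [lra|].
  destruct (H2 (eps/2)) as [N2 HN2]; [lra|].
  exists (Nat.max N1 N2). intros n Hn. rewrite vopp_add, vadd_swap.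
  eapply Rle_lt_trans; [apply vnorm_triangle|].
  specialize (HN1 n ltac:(lia)). specialize (HN2 n ltac:(lia)). lra.
Qed.

Lemma conv_scal (X : Banach) v x c : conv X v x -> conv X (fun n => vscal c (v n)) (vscal c x).
Proof.
  intros H eps Heps. destruct (H (eps / (Rabs c + 1))) as [N HN].
  { apply Rdiv_lt_0_compat; auto. pose proof (Rabs_pos c). lra. }
  exists N. intros n Hn. rewrite <- vscal_opp, <- vscal_distr_l, vnorm_scal.
  specialize (HN n Hn). pose proof (Rabs_pos c). pose proof (vnorm_nonneg X (vadd (v n) (vopp x))).
  apply Rle_lt_trans with ((Rabs c + 1) * vnorm (vadd (v n) (vopp x))); [nra|].
  apply Rmult_lt_compat_l with (r := Rabs c + 1) in HN; [|lra].
  replace ((Rabs c + 1) * (eps / (Rabs c + 1))) with eps in HN by (field; lra). exact HN.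
Qed.

Definition psum (X : Banach) (u : nat -> X) (a : nat -> R) (n : nat) : X :=
  vsum X (fun k => vscal (a k) (u k)) n.

Lemma psum_add (X : Banach) u a b n :
  psum X u (fun k => a k + b k) n = vadd (psum X u a n) (psum X u b n).
Proof.
  unfold psum. induction n; simpl. rewrite vadd_0; auto.
  rewrite IHn, vscal_distr_r. apply vadd_swap.
Qed.

Lemma psum_scal (X : Banach) u a c n :
  psum X u (fun k => c * a k) n = vscal c (psum X u a n).
Proof.
  unfold psum. induction n; simpl. rewrite vscal_zero; auto.
  rewrite IHn, vscal_distr_l, vscal_assoc. reflexivity.
Qed.

Lemma psum_upper (X : Banach) u a n : (forall k, vnorm (u k) <= 1) ->
  vnorm (psum X u a n) <= rsum (fun k => Rabs (a k)) n.
Proof.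
  intros Hu. unfold psum. induction n; simpl. rewrite vnorm_zero; lra.
  eapply Rle_trans; [apply vnorm_triangle|]. rewrite vnorm_scal.
  pose proof (Hu n). pose proof (Rabs_pos (a n)). nra.
Qed.

Lemma psum_cauchy (X : Banach) u a n m : (forall k, vnorm (u k) <= 1) -> (n <= m)%nat ->
  dist X (psum X u a m) (psum X u a n) <= rsum (fun k => Rabs (a k)) m - rsum (fun k => Rabs (a k)) n.
Proof.
  intros Hu Hnm. induction Hnm. rewrite dist_self; lra.
  unfold dist, psum in *. simpl. rewrite vadd_rearr.
  eapply Rle_trans; [apply vnorm_triangle|]. rewrite vnorm_scal.
  pose proof (Hu m). pose proof (Rabs_pos (a m)). nra.
Qed.

Lemma psum_converges (X : Banach) u a l : (forall k, vnorm (u k) <= 1) ->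
  infinite_sum (fun n => Rabs (a n)) l -> exists x, conv X (psum X u a) x.
Proof.
  intros Hu Hl. apply vcomplete. intros eps Heps.
  destruct (Hl (eps / 2)) as [N HN]; [lra|].
  exists (S N). intros m n Hm Hn.
  assert (Hr : forall p, (S N <= p)%nat -> Rabs (rsum (fun k => Rabs (a k)) p - l) < eps / 2).
  { intros p Hp. destruct p; [lia|]. rewrite rsum_sum_f. apply HN. lia. }
  pose proof (Hr m Hm) as Hm'. pose proof (Hr n Hn) as Hn'.
  apply Rabs_def2 in Hm'. apply Rabs_def2 in Hn'.
  destruct (Compare_dec.le_ge_dec n m) as [Hnm|Hnm].
  - pose proof (psum_cauchy X u a n m Hu Hnm). unfold dist in *. lra.
  - pose proof (psum_cauchy X u a m n Hu Hnm). rewrite dist_sym in *. unfold dist in *. lra.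
Qed.

Definition independent (X : Banach) (u : nat -> X) (r s : R) :=
  forall (sg : nat -> bool) n, exists f, dual_ball X f /\ forall k, (k < n)%nat ->
    (sg k = true -> s <= f (u k)) /\ (sg k = false -> f (u k) <= r).

(* Lower ell_1 estimate: test sum a_k u_k against the functionals realising
   the sign pattern of a and its opposite. *)
Lemma psum_lower (X : Banach) (u : nat -> X) (r s : R) : independent X u r s ->
  forall a n, (s - r) / 2 * rsum (fun k => Rabs (a k)) n <= vnorm (psum X u a n).
Proof.
  intros Hpat a n.
  set (sg := fun k => if Rle_dec 0 (a k) then true else false).
  destruct (Hpat sg n) as [f1 [[Hf1 Nf1] P1]].
  destruct (Hpat (fun k => negb (sg k)) n) as [f2 [[Hf2 Nf2] P2]].
  assert (E : forall f, is_dual X f -> f (psum X u a n) = rsum (fun k => a k * f (u k)) n).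
  { intros f Hf. unfold psum. rewrite dual_vsum by auto. apply rsum_ext. intro k. apply dual_scal; auto. }
  assert (Hd : f1 (psum X u a n) - f2 (psum X u a n) = rsum (fun k => a k * (f1 (u k) - f2 (u k))) n).
  { rewrite !E by auto. clear - f1 f2 a u. induction n; simpl; [ring|]. rewrite <- IHn. ring. }
  assert (Hle : rsum (fun k => (s - r) * Rabs (a k)) n <= rsum (fun k => a k * (f1 (u k) - f2 (u k))) n).
  { apply rsum_le. intros k Hk. destruct (P1 k Hk) as [P1t P1f]. destruct (P2 k Hk) as [P2t P2f].
    unfold sg in *. destruct (Rle_dec 0 (a k)) as [Ha|Ha]; simpl in *.
    - specialize (P1t eq_refl). specialize (P2f eq_refl). rewrite Rabs_right by lra. nra.
    - specialize (P1f eq_refl). specialize (P2t eq_refl). rewrite Rabs_left by lra. nra. }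
  rewrite rsum_scal in Hle.
  pose proof (Nf1 (psum X u a n)). pose proof (Nf2 (psum X u a n)).
  pose proof (Rle_abs (f1 (psum X u a n))). pose proof (Rle_abs (- f2 (psum X u a n))) as Habs2.
  rewrite Rabs_Ropp in Habs2. lra.
Qed.

Section L1Embedding.

Variables (X : Banach) (u : nat -> X) (r s : R).
Hypothesis Hrs : r < s.
Hypothesis Hu : forall k, vnorm (u k) <= 1.
Hypothesis Hind : independent X u r s.

Definition l1_sum (a : nat -> R) : X :=
  epsilon (inhabits vzero) (fun x => conv X (psum X u a) x).

Lemma l1_sum_spec a : is_l1 a -> conv X (psum X u a) (l1_sum a).
Proof. intros [l Hl]. unfold l1_sum. apply epsilon_spec. exact (psum_converges X u a l Hu Hl). Qed.

Lemma l1_sum_add a b : is_l1 a -> is_l1 b ->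
  l1_sum (fun n => a n + b n) = vadd (l1_sum a) (l1_sum b).
Proof.
  intros Ha Hb. apply (conv_unique X (psum X u (fun n => a n + b n))).
  - unfold l1_sum at 1. apply epsilon_spec. exists (vadd (l1_sum a) (l1_sum b)).
    apply (conv_ext X (fun n => vadd (psum X u a n) (psum X u b n))).
    { intro n. symmetry. apply psum_add. }
    apply conv_add; apply l1_sum_spec; auto.
  - apply (conv_ext X (fun n => vadd (psum X u a n) (psum X u b n))).
    { intro n. symmetry. apply psum_add. }
    apply conv_add; apply l1_sum_spec; auto.
Qed.

Lemma l1_sum_scal c a : is_l1 a -> l1_sum (fun n => c * a n) = vscal c (l1_sum a).
Proof.
  intros Ha. apply (conv_unique X (psum X u (fun n => c * a n))).
  - unfold l1_sum at 1. apply epsilon_spec. exists (vscal c (l1_sum a)).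
    apply (conv_ext X (fun n => vscal c (psum X u a n))).
    { intro n. symmetry. apply psum_scal. }
    apply conv_scal, l1_sum_spec; auto.
  - apply (conv_ext X (fun n => vscal c (psum X u a n))).
    { intro n. symmetry. apply psum_scal. }
    apply conv_scal, l1_sum_spec; auto.
Qed.

Lemma l1_sum_bounds a l : infinite_sum (fun n => Rabs (a n)) l ->
  (s - r) / 2 * l <= vnorm (l1_sum a) /\ vnorm (l1_sum a) <= 1 * l.
Proof.
  intros Hl. assert (Hc := l1_sum_spec a (ex_intro _ l Hl)).
  assert (Hbel := rsum_le_sum _ l (fun k => Rabs_pos (a k)) Hl).
  split.
  - apply le_epsilon. intros eps Heps.
    set (e := eps / ((s - r) / 2 + 1)).
    assert (He : 0 < e) by (apply Rdiv_lt_0_compat; lra).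
    destruct (Hc e He) as [N1 HN1]. destruct (Hl e He) as [N2 HN2].
    set (n := S (Nat.max N1 N2)).
    specialize (HN1 n ltac:(unfold n; lia)). specialize (HN2 (Nat.max N1 N2) ltac:(lia)).
    rewrite <- rsum_sum_f in HN2. fold n in HN2. unfold R_dist in HN2. apply Rabs_def2 in HN2.
    pose proof (psum_lower X u r s Hind a n).
    pose proof (vnorm_dist X (psum X u a n) (l1_sum a)) as Hd. unfold dist in Hd.
    assert (eps = e * ((s - r) / 2 + 1)) by (unfold e; field; lra).
    nra.
  - apply le_epsilon. intros eps Heps.
    destruct (Hc eps Heps) as [N1 HN1]. specialize (HN1 N1 (le_n _)).
    pose proof (vnorm_dist X (l1_sum a) (psum X u a N1)) as Hd.
    rewrite dist_sym in Hd. unfold dist in Hd.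
    pose proof (psum_upper X u a N1 Hu). pose proof (Hbel N1). lra.
Qed.

Lemma l1_of_independent : contains_l1 X.
Proof.
  exists l1_sum, ((s - r) / 2), 1. split; [lra|]. split; [lra|].
  split; [exact l1_sum_add|]. split; [exact l1_sum_scal|]. exact l1_sum_bounds.
Qed.

End L1Embedding.

Section Rosenthal.

Variables (X : Banach) (HX : ~ contains_l1 X) (y : nat -> X).
Hypothesis Hy : forall j, vnorm (y j) <= 1.

Lemma not_hereditarily_oscillating r s M :
  r < s -> infinite M -> ~ hereditarily_oscillating X y r s (dual_ball X) M.
Proof.
  intros Hrs HM HH. apply HX. destruct (independent_subsequence X y r s M HM HH) as [ms Hms].
  apply (l1_of_independent X (fun k => y (ms (S k))) r s Hrs); auto.
  intros sg n. destruct (Hms sg n) as [f Hf]. exists f. exact (pattern_class_spec X y r s ms sg n f Hf).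
Qed.

Lemma kill_oscillation r s H : r < s -> infinite H ->
  exists N, infinite N /\ (forall n, N n -> H n) /\
    forall f, dual_ball X f -> ~ oscillates X y r s f N.
Proof.
  intros Hrs HH. pose proof (not_hereditarily_oscillating r s H Hrs HH) as Hn.
  apply not_all_ex_not in Hn. destruct Hn as [N Hn].
  apply imply_to_and in Hn. destruct Hn as [HN Hn].
  apply imply_to_and in Hn. destruct Hn as [HNH Hn].
  exists N. split; auto. split; auto.
  intros f Hf Ho. apply Hn. eauto.
Qed.

Lemma kill_oscillations (ps : list (R * R)) : (forall p, In p ps -> fst p < snd p) ->
  forall H, infinite H -> exists N, infinite N /\ (forall n, N n -> H n) /\
    forall p, In p ps -> forall f, dual_ball X f -> ~ oscillates X y (fst p) (snd p) f N.
Proof.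
  induction ps as [|p ps IH]; intros Hps H HH.
  - exists H. split; [auto|]. split; [auto|]. intros p [].
  - destruct (IH (fun q Hq => Hps q (or_intror Hq)) H HH) as [N1 [HN1 [HN1H HN1o]]].
    destruct (kill_oscillation (fst p) (snd p) N1 (Hps p (or_introl eq_refl)) HN1)
      as [N2 [HN2 [HN2H HN2o]]].
    exists N2. split; auto. split; [intros n Hn; auto|].
    intros q [<-|Hq] f Hf Ho; [apply (HN2o f Hf Ho)|].
    apply (HN1o q Hq f Hf). apply (oscillates_sub X y _ _ f N1 N2); auto.
Qed.

End Rosenthal.

Definition grid (n t : nat) : R := INR t / INR (S n) - 2.
Definition grid_pairs (n : nat) : list (R * R) :=
  map (fun t => (grid n t, grid n (S t))) (seq 0 (3 * S n + 2)).

Lemma grid_lt n t : grid n t < grid n (S t).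
Proof.
  unfold grid. pose proof (lt_0_INR (S n) ltac:(lia)).
  apply Rplus_lt_compat_r. unfold Rdiv. apply Rmult_lt_compat_r; [apply Rinv_0_lt_compat; lra|].
  apply lt_INR. lia.
Qed.

Lemma grid_pairs_lt n p : In p (grid_pairs n) -> fst p < snd p.
Proof. unfold grid_pairs. intros Hp. apply in_map_iff in Hp. destruct Hp as [t [<- _]]. apply grid_lt. Qed.

Lemma grid_pairs_in n t : (t < 3 * S n + 2)%nat -> In (grid n t, grid n (S t)) (grid_pairs n).
Proof. intro Ht. unfold grid_pairs. apply in_map_iff. exists t. split; auto. apply in_seq. lia. Qed.

Lemma grid_0 n : grid n 0 = -2.
Proof. unfold grid. simpl. unfold Rdiv. rewrite Rmult_0_l. ring. Qed.

Lemma grid_top n : grid n (3 * S n) = 1.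
Proof.
  unfold grid. rewrite mult_INR. pose proof (lt_0_INR (S n) ltac:(lia)). simpl (INR 3).
  field_simplify; lra.
Qed.

Lemma grid_width n t : grid n (S (S t)) - grid n t = 2 / INR (S n).
Proof. unfold grid. rewrite !S_INR. pose proof (pos_INR n). field. lra. Qed.

Lemma eventually_in_grid_cell (X : Banach) (y : nat -> X) (Hy : forall j, vnorm (y j) <= 1) n H f :
  infinite H -> dual_ball X f ->
  (forall p, In p (grid_pairs n) -> ~ oscillates X y (fst p) (snd p) f H) ->
  exists N0 t, forall m, (N0 <= m)%nat -> H m -> grid n t < f (y m) < grid n (S (S t)).
Proof.
  intros HH [_ Hf] Hno.
  assert (Hb : forall m, -1 <= f (y m) <= 1).
  { intro m. pose proof (Hf (y m)). pose proof (Hy m).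
    revert H0; unfold Rabs; destruct Rcase_abs; intros; lra. }
  set (EvGt := fun c => exists N0, forall m, (N0 <= m)%nat -> H m -> c < f (y m)).
  set (EvLt := fun c => exists N0, forall m, (N0 <= m)%nat -> H m -> f (y m) < c).
  (* No oscillation across [grid t, grid (t+1)]: eventually above or below. *)
  assert (dich : forall t, (t < 3 * S n + 2)%nat -> EvGt (grid n t) \/ EvLt (grid n (S t))).
  { intros t Ht. specialize (Hno _ (grid_pairs_in n t Ht)). simpl in Hno. unfold oscillates in Hno.
    apply not_and_or in Hno. destruct Hno as [Hn|Hn]; [left|right];
    apply not_all_ex_not in Hn; destruct Hn as [N0 Hn]; exists N0; intros m Hm HHm;
    apply Rnot_le_lt; intro Hc; apply Hn; exists m; auto. }
  (* Climb the grid from -2 while the values stay eventually above. *)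
  assert (Hind : forall u t, (t + u = 3 * S n)%nat -> EvGt (grid n t) ->
     exists N0 t', forall m, (N0 <= m)%nat -> H m -> grid n t' < f (y m) < grid n (S (S t'))).
  { induction u as [|u IH]; intros t Ht [N0 HN0].
    - rewrite Nat.add_0_r in Ht. subst t. rewrite grid_top in HN0.
      destruct (HH N0) as [m [Hm HHm]]. specialize (HN0 m Hm HHm). specialize (Hb m). lra.
    - destruct (dich (S t) ltac:(lia)) as [Hg|[N1 HN1]].
      + apply (IH (S t)); auto. lia.
      + exists (Nat.max N0 N1), t. intros m Hm HHm. split.
        * apply HN0; auto; lia.
        * apply HN1; auto; lia. }
  apply (Hind (3 * S n)%nat 0%nat); [lia|]. exists 0%nat. intros m _ _. rewrite grid_0.
  specialize (Hb m). lra.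
Qed.

Lemma dual_ball_rescale (X : Banach) f : is_dual X f ->
  exists c, 0 < c /\ dual_ball X (fun x => f x / c).
Proof.
  intros [Hadd [Hsc [Mf HMf]]].
  set (c := Rabs Mf + 1).
  assert (Hc : 0 < c) by (unfold c; pose proof (Rabs_pos Mf); lra).
  assert (Hbound : forall x, Rabs (f x / c) <= vnorm x).
  { intros x. unfold Rdiv. rewrite Rabs_mult, Rabs_inv, (Rabs_right c) by lra.
    pose proof (HMf x). pose proof (vnorm_nonneg X x).
    apply (Rmult_le_reg_r c); [lra|]. rewrite Rmult_assoc, Rinv_l by lra.
    unfold c. pose proof (Rle_abs Mf). nra. }
  exists c. split; [exact Hc|]. split; [split; [|split]|exact Hbound].
  - intros x z. rewrite Hadd. field. lra.
  - intros a x. rewrite Hsc. field. lra.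
  - exists 1. intros x. rewrite Rmult_1_l. apply Hbound.
Qed.

Fixpoint diagonal (next : nat * nat -> nat) (j : nat) : nat :=
  match j with O => next (0%nat, 0%nat) | S j' => next (S j', S (diagonal next j')) end.

Lemma diagonal_subsequence (HH : nat -> nat -> Prop) : (forall i, infinite (HH i)) ->
  exists g : nat -> nat, (forall j, (g j < g (S j))%nat) /\ forall j, HH j (g j).
Proof.
  intros Hinf.
  destruct (choice (fun (jb : nat * nat) m => (snd jb <= m)%nat /\ HH (fst jb) m)) as [next Hnext].
  { intros [j b]. destruct (Hinf j b) as [m Hm]. exists m. exact Hm. }
  exists (diagonal next). split.
  - intro j. simpl. destruct (Hnext (S j, S (diagonal next j))) as [H _]. simpl in H. lia.
  - intros [|j]; simpl; apply (Hnext (_, _)).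
Qed.

Section RosenthalTheorem.

Variables (X : Banach) (HX : ~ contains_l1 X) (y : nat -> X).
Hypothesis Hy : forall j, vnorm (y j) <= 1.

Lemma nested_oscillation_free : exists HH : nat -> nat -> Prop,
  (forall i, infinite (HH i)) /\ (forall i j, (i <= j)%nat -> forall n, HH j n -> HH i n) /\
  forall i p, In p (grid_pairs i) -> forall f, dual_ball X f ->
    ~ oscillates X y (fst p) (snd p) f (HH (S i)).
Proof.
  set (valid := fun a : nat * (nat -> Prop) => infinite (snd a)).
  set (rel := fun a b : nat * (nat -> Prop) => fst b = S (fst a) /\ infinite (snd b) /\
     (forall n, snd b n -> snd a n) /\
     forall p, In p (grid_pairs (fst a)) -> forall f, dual_ball X f ->
       ~ oscillates X y (fst p) (snd p) f (snd b)).
  destruct (dependent_choice valid rel (0%nat, fun _ => True)) as [sq [Hsq0 Hsq]].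
  { intro n. exists n. split; [lia|exact I]. }
  { intros [i H] HH. destruct (kill_oscillations X HX y Hy (grid_pairs i) (grid_pairs_lt i) H HH)
      as [N [HN1 [HN2 HN3]]].
    exists (S i, N). unfold rel; simpl. auto. }
  { intros a b _ [_ [Hb _]]. exact Hb. }
  assert (Hfst : forall i, fst (sq i) = i).
  { induction i. rewrite Hsq0; auto. destruct (Hsq i) as [_ [E _]]. rewrite E, IHi. auto. }
  exists (fun i => snd (sq i)). split; [|split].
  - intro i. apply (Hsq i).
  - intros i j Hij. induction Hij; auto. intros n Hn. apply IHHij.
    destruct (Hsq m) as [_ [_ [_ [H _]]]]. apply H, Hn.
  - intros i p Hp f Hf. destruct (Hsq i) as [_ [_ [_ [_ H]]]]. apply H; auto. rewrite Hfst; auto.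
Qed.

Theorem rosenthal_l1 :
  exists g : nat -> nat, (forall j, (g j < g (S j))%nat) /\ weakly_cauchy X (fun j => y (g j)).
Proof.
  destruct nested_oscillation_free as [HH [Hinf [Hsub Hno]]].
  destruct (diagonal_subsequence HH Hinf) as [g [Hg HgH]].
  exists g. split; auto.
  intros f Hf eps Heps.
  destruct (dual_ball_rescale X f Hf) as [c [Hc Hf']].
  (* Choose a grid of mesh 2/(n+1) < eps/c; the rescaled values along the
     diagonal are eventually in one of its cells. *)
  destruct (INR_archimed (eps / c) 2) as [n Hn]; [apply Rdiv_lt_0_compat; lra|].
  destruct (eventually_in_grid_cell X y Hy n (HH (S n)) _ (Hinf (S n)) Hf' (fun p Hp => Hno n p Hp _ Hf'))
    as [N0 [t Ht]].
  exists (Nat.max N0 (S n)). intros p q Hp Hq.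
  assert (Hgp := strict_ge g Hg p). assert (Hgq := strict_ge g Hg q).
  destruct (Ht (g p) ltac:(lia) (Hsub (S n) p ltac:(lia) _ (HgH p))) as [Hp1 Hp2].
  destruct (Ht (g q) ltac:(lia) (Hsub (S n) q ltac:(lia) _ (HgH q))) as [Hq1 Hq2].
  pose proof (grid_width n t).
  assert (Hw : 2 / INR (S n) < eps / c).
  { rewrite S_INR. pose proof (pos_INR n). apply (Rmult_lt_reg_r (INR n + 1)); [lra|].
    unfold Rdiv at 1. rewrite Rmult_assoc, Rinv_l by lra. nra. }
  assert (Habs : Rabs ((f (y (g p)) - f (y (g q))) / c) < eps / c).
  { replace ((f (y (g p)) - f (y (g q))) / c) with (f (y (g p)) / c - f (y (g q)) / c) by (field; lra).
    apply Rabs_def1; lra. }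
  unfold Rdiv in Habs. rewrite Rabs_mult, Rabs_inv, (Rabs_right c) in Habs by lra.
  apply (Rmult_lt_compat_r c) in Habs; [|lra]. rewrite !Rmult_assoc, !Rinv_l in Habs by lra. lra.
Qed.

End RosenthalTheorem.

Theorem lemma2p5 (X : Banach) (HX : ~ contains_l1 X)
  (xs : nat -> X -> R) (Hdual : forall k, is_dual X (xs k))
  (Hbdd : exists M, forall k, dnorm X (xs k) <= M) :
  ca X xs <= 3 * ca_rho X xs.
Proof.
  destruct Hbdd as [M0 Hb].
  apply (ca_le_3_ca_rho_of_rosenthal X) with (M0 := M0); auto.
  intros y Hy. exact (rosenthal_l1 X HX y Hy).
Qed.
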